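(* Let $\Delta\subset\mathbb{R}^2$ be a lattice polygon with $\operatorname{lw}(\Delta)=d$. If $\Delta$ has two linearly independent lattice width directions $v,w\in\mathbb{Z}^2$, then $\operatorname{ls}_\square(\Delta)=d$.
   Context: A lattice polygon is the convex hull of a finite non-empty set of points of $\mathbb{Z}^2$. A lattice direction is a non-zero primitive vector $v\in\mathbb{Z}^2$. For a lattice polygon $\Delta$ and a lattice direction $v$, $\operatorname{lw}_v(\Delta)=\max_{P\in\Delta}\langle P,v\rangle-\min_{P\in\Delta}\langle P,v\rangle$, and the lattice width is $\operatorname{lw}(\Delta)=\min_v\operatorname{lw}_v(\Delta)$ over all lattice directions $v$. A lattice width direction of $\Delta$ is a lattice direction $v$ with $\operatorname{lw}_v(\Delta)=\operatorname{lw}(\Delta)$. A unimodular transformation is a map $x\mapsto Ax+b$ with $A\in\mathrm{GL}_2(\mathbb{Z})$, $b\in\mathbb{Z}^2$; two lattice polygons are equivalent if one is mapped onto the other by a unimodular transformation. With $\square=\operatorname{conv}\{(0,0),(1,0),(1,1),(0,1)\}$, $\operatorname{ls}_\square(\Delta)$ is the smallest integer $d\ge 0$ for which there is a unimodular transformation $\varphi$ with $\varphi(\Delta)\subset d\square=[0,d]\times[0,d]$. *)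

From Stdlib Require Import Reals ZArith List.
Open Scope R_scope.

Definition pt := (R * R)%type.
Definition zpt := (Z * Z)%type.

Definition of_zpt (p : zpt) : pt := (IZR (fst p), IZR (snd p)).

(* Convex hull of a finite list of lattice points: all convex combinations
   sum_i w_i * s_i with w_i >= 0, sum_i w_i = 1. *)
Fixpoint wsum (ws : list R) (S : list zpt) : pt :=
  match ws, S with
  | w :: ws', s :: S' =>
      let r := wsum ws' S' in
      (w * IZR (fst s) + fst r, w * IZR (snd s) + snd r)
  | _, _ => (0, 0)
  end.

Definition conv (S : list zpt) (x : pt) : Prop :=
  exists ws : list R,
    length ws = length S /\ Forall (fun w => 0 <= w) ws /\
    fold_right Rplus 0 ws = 1 /\ x = wsum ws S.

Definition lattice_dir (v : zpt) : Prop :=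
  v <> (0%Z, 0%Z) /\ Z.gcd (fst v) (snd v) = 1%Z.

Definition dot (P : pt) (v : zpt) : R :=
  fst P * IZR (fst v) + snd P * IZR (snd v).

Definition lw_dir_is (D : pt -> Prop) (v : zpt) (l : R) : Prop :=
  exists M m : R,
    (exists P, D P /\ dot P v = M) /\ (forall P, D P -> dot P v <= M) /\
    (exists P, D P /\ dot P v = m) /\ (forall P, D P -> m <= dot P v) /\
    l = M - m.

Definition lw_is (D : pt -> Prop) (l : R) : Prop :=
  (exists v, lattice_dir v /\ lw_dir_is D v l) /\
  (forall v l', lattice_dir v -> lw_dir_is D v l' -> l <= l').

Definition width_dir (D : pt -> Prop) (v : zpt) : Prop :=
  lattice_dir v /\ exists l, lw_is D l /\ lw_dir_is D v l.

(* Unimodular transformation x |-> A x + b, A = [[a11 a12];[a21 a22]] in GL_2(Z),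
   b in Z^2. *)
Record unimod := Unimod { a11 : Z; a12 : Z; a21 : Z; a22 : Z; b1 : Z; b2 : Z }.

Definition unimod_ok (f : unimod) : Prop :=
  (a11 f * a22 f - a12 f * a21 f = 1 \/ a11 f * a22 f - a12 f * a21 f = -1)%Z.

Definition apply_unimod (f : unimod) (x : pt) : pt :=
  (IZR (a11 f) * fst x + IZR (a12 f) * snd x + IZR (b1 f),
   IZR (a21 f) * fst x + IZR (a22 f) * snd x + IZR (b2 f)).

Definition fits_in_square (D : pt -> Prop) (d : Z) : Prop :=
  exists f, unimod_ok f /\
    forall x, D x ->
      0 <= fst (apply_unimod f x) <= IZR d /\ 0 <= snd (apply_unimod f x) <= IZR d.

Definition ls_square_is (D : pt -> Prop) (d : Z) : Prop :=
  (0 <= d)%Z /\ fits_in_square D d /\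
  (forall d', (0 <= d')%Z -> fits_in_square D d' -> (d <= d')%Z).

Definition lin_indep (v w : zpt) : Prop :=
  (fst v * snd w - snd v * fst w <> 0)%Z.

(* A
   unimodular map sends Delta into [0,d']^2 only if the lattice width along
   its first row is at most d', so ls >= lw.  Conversely, the rows p, q of a
   unimodular matrix with lw_p = lw_q = d give a map into [0,d]^2.  Such a
   basis exists: complete the primitive width direction v to a basis (v, u)
   and write w = a v + b u.  If |b| >= 2, choose k with |a - k b| <= |b|/2;
   then b (u + k v) = w - (a - k b) v, so the width along u + k v is at most
   (d + |b| d / 2) / |b| <= d, and (v, u + k v) is unimodular. *)

From Stdlib Require Import Reals ZArith List Lra Lia.

Section IntegerLattice.
Local Open Scope Z_scope.

Definition zdot (s u : zpt) : Z := fst s * fst u + snd s * snd u.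
Definition zdet (p q : zpt) : Z := fst p * snd q - snd p * fst q.

Definition width_le (S : list zpt) (u : zpt) (d : Z) : Prop :=
  forall s t, In s S -> In t S -> zdot s u - zdot t u <= d.

Lemma Z_centered_division (a b : Z) :
  b <> 0 -> exists r k : Z, a = r + k * b /\ 2 * Z.abs r <= Z.abs b.
Proof.
  intro Hb. pose proof (Z.div_mod a b Hb).
  destruct (Z.le_gt_cases 0 b).
  - pose proof (Z.mod_pos_bound a b ltac:(lia)).
    destruct (Z.le_gt_cases (2 * (a mod b)) b).
    + exists (a mod b), (a / b). lia.
    + exists (a mod b - b), (a / b + 1). lia.
  - pose proof (Z.mod_neg_bound a b ltac:(lia)).
    destruct (Z.le_gt_cases (- b) (- 2 * (a mod b))).
    + exists (a mod b - b), (a / b + 1). lia.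
    + exists (a mod b), (a / b). lia.
Qed.

Lemma lattice_dir_completion (v : zpt) : lattice_dir v -> exists u, zdet v u = 1.
Proof.
  intros [_ Hgcd]. destruct (Z.gcd_bezout _ _ _ Hgcd) as [x [y Hxy]].
  exists (- y, x). unfold zdet; simpl. lia.
Qed.

Lemma zdet_cramer (v u w : zpt) :
  zdet v u * fst w = zdet w u * fst v + zdet v w * fst u /\
  zdet v u * snd w = zdet w u * snd v + zdet v w * snd u.
Proof. unfold zdet; split; ring. Qed.

Lemma width_le_shortened (S : list zpt) (d b c : Z) (v w z : zpt) :
  width_le S v d -> width_le S w d ->
  b * fst z = fst w - c * fst v -> b * snd z = snd w - c * snd v ->
  1 + Z.abs c <= Z.abs b ->
  width_le S z d.
Proof.
  intros Hv Hw E1 E2 Hcb s t Hs Ht.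
  assert (Hgap : b * (zdot s z - zdot t z) =
                 (zdot s w - zdot t w) - c * (zdot s v - zdot t v)).
  { transitivity (fst s * (b * fst z) + snd s * (b * snd z)
                  - fst t * (b * fst z) - snd t * (b * snd z));
      [unfold zdot; ring | rewrite E1, E2; unfold zdot; ring]. }
  pose proof (Hv s t Hs Ht); pose proof (Hv t s Ht Hs).
  pose proof (Hw s t Hs Ht); pose proof (Hw t s Ht Hs).
  set (gz := (zdot s z - zdot t z)) in *.
  set (gv := (zdot s v - zdot t v)) in *.
  set (gw := (zdot s w - zdot t w)) in *.
  assert (Hgv : Z.abs gv <= d) by lia.
  assert (Hgw : Z.abs gw <= d) by lia.
  assert (Hbz : Z.abs b * Z.abs gz <= Z.abs b * d).
  { rewrite <- Z.abs_mul, Hgap.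
    pose proof (Z.abs_triangle gw (- (c * gv))) as Htri.
    rewrite Z.abs_opp, Z.abs_mul in Htri. nia. }
  assert (Z.abs gz <= d) by (apply (Z.mul_le_mono_pos_l _ _ (Z.abs b)); lia).
  lia.
Qed.

Lemma unimodular_completion_width_le (S : list zpt) (d : Z) (v w : zpt) :
  lattice_dir v -> width_le S v d -> width_le S w d -> zdet v w <> 0 ->
  exists z, (zdet v z = 1 \/ zdet v z = -1) /\ width_le S z d.
Proof.
  intros Hv Wv Ww Hvw.
  destruct (Z.eq_dec (Z.abs (zdet v w)) 1) as [Hb1 | Hb2].
  { exists w. split; [lia | exact Ww]. }
  destruct (lattice_dir_completion v Hv) as [u Hu].
  destruct (zdet_cramer v u w) as [C1 C2]. rewrite Hu in C1, C2.
  destruct (Z_centered_division (zdet w u) (zdet v w) Hvw) as [r [k [Ha Hr]]].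
  rewrite Ha in C1, C2.
  exists (fst u + k * fst v, snd u + k * snd v). split.
  - left. revert Hu. unfold zdet; simpl. lia.
  - apply (width_le_shortened S d (zdet v w) r v w); auto; [..| lia];
      cbn [fst snd]; lia.
Qed.

End IntegerLattice.

Lemma dot_of_zpt (s u : zpt) : dot (of_zpt s) u = IZR (zdot s u).
Proof. unfold dot, of_zpt, zdot; simpl. rewrite plus_IZR, !mult_IZR. ring. Qed.

Lemma conv_of_In (S : list zpt) (s : zpt) : In s S -> conv S (of_zpt s).
Proof.
  induction S as [|a S IH]; simpl; [tauto |]. intros [<- | Hs].
  - exists (1 :: repeat 0 (length S)). repeat split.
    + simpl. now rewrite repeat_length.
    + constructor; [lra |]. apply Forall_forall. intros x Hx.
      apply repeat_spec in Hx. lra.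
    + simpl. enough (fold_right Rplus 0 (repeat 0 (length S)) = 0) by lra.
      induction (length S) as [|n IHn]; simpl; [| rewrite IHn]; lra.
    + simpl. enough (wsum (repeat 0 (length S)) S = (0, 0)) as -> by
        (unfold of_zpt; simpl; f_equal; ring).
      clear IH. induction S as [|b S IHS]; simpl; [reflexivity |].
      rewrite IHS; simpl; f_equal; ring.
  - destruct (IH Hs) as [ws [Hlen [Hpos [Hsum ->]]]].
    exists (0 :: ws). repeat split; simpl.
    + now rewrite Hlen.
    + now constructor; [lra |].
    + lra.
    + destruct (wsum ws S); simpl; f_equal; ring.
Qed.

Lemma conv_dot_bounds (S : list zpt) (u : zpt) (lo hi : R) (x : pt) :
  (forall s, In s S -> lo <= dot (of_zpt s) u <= hi) -> conv S x -> lo <= dot x u <= hi.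
Proof.
  intros Hb [ws [Hlen [Hpos [Hsum ->]]]].
  enough (lo * fold_right Rplus 0 ws <= dot (wsum ws S) u <= hi * fold_right Rplus 0 ws)
    by (rewrite Hsum in *; lra).
  clear Hsum. revert ws Hlen Hpos.
  induction S as [|a S IH]; intros [|w ws] Hlen Hpos; try discriminate.
  - unfold dot; simpl. lra.
  - inversion Hpos as [| ? ? Hw Hws]; subst.
    assert (Hsplit : dot (wsum (w :: ws) (a :: S)) u = w * dot (of_zpt a) u + dot (wsum ws S) u)
      by (unfold dot, of_zpt; simpl; ring).
    rewrite Hsplit. simpl.
    destruct (Hb a (or_introl eq_refl)).
    pose proof (IH (fun s Hs => Hb s (or_intror Hs)) ws (eq_add_S _ _ Hlen) Hws).
    assert (w * lo <= w * dot (of_zpt a) u <= w * hi) by (split; apply Rmult_le_compat_l; lra).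
    lra.
Qed.

Lemma exists_argmin {A : Type} (g : A -> Z) (S : list A) :
  S <> nil -> exists s0, In s0 S /\ forall s, In s S -> (g s0 <= g s)%Z.
Proof.
  induction S as [|a S IH]; intro Hne; [congruence |].
  destruct S as [|b S].
  { exists a. split; [now left |]. intros s [<- | []]. lia. }
  destruct IH as [s1 [Hs1 Hmin]]; [discriminate |].
  destruct (Z.le_gt_cases (g a) (g s1)).
  - exists a. split; [now left |]. intros s [<- | Hs]; [lia |]. specialize (Hmin s Hs). lia.
  - exists s1. split; [now right |]. intros s [<- | Hs]; [lia | auto].
Qed.

Lemma conv_dot_range (S : list zpt) (u : zpt) :
  S <> nil -> exists smin smax, In smin S /\ In smax S /\
    forall x, conv S x -> IZR (zdot smin u) <= dot x u <= IZR (zdot smax u).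
Proof.
  intro Hne.
  destruct (exists_argmin (fun s => zdot s u) S Hne) as [smin [Hmin Hle_min]].
  destruct (exists_argmin (fun s => (- zdot s u)%Z) S Hne) as [smax [Hmax Hle_max]].
  exists smin, smax. split; [exact Hmin | split; [exact Hmax |]].
  intros x Hx. apply (conv_dot_bounds S u); auto.
  intros s Hs. rewrite dot_of_zpt. specialize (Hle_min s Hs). specialize (Hle_max s Hs).
  split; apply IZR_le; lia.
Qed.

Lemma lw_dir_conv (S : list zpt) (u : zpt) :
  S <> nil -> exists smax smin, In smax S /\ In smin S /\
    lw_dir_is (conv S) u (IZR (zdot smax u - zdot smin u)).
Proof.
  intro Hne. destruct (conv_dot_range S u Hne) as [smin [smax [Hmin [Hmax Hrange]]]].
  exists smax, smin. repeat split; auto.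
  exists (IZR (zdot smax u)), (IZR (zdot smin u)). rewrite minus_IZR. repeat split.
  - exists (of_zpt smax). split; [now apply conv_of_In | apply dot_of_zpt].
  - intros P HP. apply (Hrange P HP).
  - exists (of_zpt smin). split; [now apply conv_of_In | apply dot_of_zpt].
  - intros P HP. apply (Hrange P HP).
Qed.

Lemma width_dir_width_le (S : list zpt) (d : Z) (u : zpt) :
  lw_is (conv S) (IZR d) -> width_dir (conv S) u -> width_le S u d.
Proof.
  intros [[u0 [Hu0 Hlw0]] _] [_ [l [[_ Hminimal] [M [m [_ [HM [_ [Hm ->]]]]]]]]].
  pose proof (Hminimal u0 (IZR d) Hu0 Hlw0).
  intros s t Hs Ht. apply le_IZR. rewrite minus_IZR, <- !dot_of_zpt.
  pose proof (HM _ (conv_of_In S s Hs)). pose proof (Hm _ (conv_of_In S t Ht)). lra.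
Qed.

Lemma unimod_row1_lattice_dir (f : unimod) : unimod_ok f -> lattice_dir (a11 f, a12 f).
Proof.
  unfold unimod_ok. intro Hf. split.
  - intro E. injection E as E1 E2. rewrite E1, E2 in Hf. lia.
  - apply Z.bezout_1_gcd. simpl. destruct Hf.
    + exists (a22 f), (- a21 f)%Z. lia.
    + exists (- a22 f)%Z, (a21 f). lia.
Qed.

Lemma fits_in_square_of_unimodular_pair (S : list zpt) (d : Z) (p q : zpt) :
  S <> nil -> (zdet p q = 1 \/ zdet p q = -1)%Z ->
  width_le S p d -> width_le S q d -> fits_in_square (conv S) d.
Proof.
  intros Hne Hpq Wp Wq.
  destruct (conv_dot_range S p Hne) as [pmin [pmax [Hpmin [Hpmax Rp]]]].
  destruct (conv_dot_range S q Hne) as [qmin [qmax [Hqmin [Hqmax Rq]]]].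
  exists (Unimod (fst p) (snd p) (fst q) (snd q) (- zdot pmin p) (- zdot qmin q)).
  split; [exact Hpq |].
  intros x Hx. specialize (Rp x Hx). specialize (Rq x Hx).
  pose proof (IZR_le _ _ (Wp pmax pmin Hpmax Hpmin)).
  pose proof (IZR_le _ _ (Wq qmax qmin Hqmax Hqmin)).
  rewrite minus_IZR in *. unfold apply_unimod, dot in *; simpl. rewrite !opp_IZR.
  split; lra.
Qed.

Lemma lw_le_of_fits_in_square (S : list zpt) (l : R) (d : Z) :
  S <> nil -> lw_is (conv S) l -> fits_in_square (conv S) d -> l <= IZR d.
Proof.
  intros Hne [_ Hminimal] [f [Hf Hfit]].
  set (r := (a11 f, a12 f)).
  destruct (lw_dir_conv S r Hne) as [smax [smin [Hmax [Hmin Hlw]]]].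
  pose proof (Hminimal r _ (unimod_row1_lattice_dir f Hf) Hlw).
  destruct (Hfit _ (conv_of_In S smax Hmax)) as [[_ Hup] _].
  destruct (Hfit _ (conv_of_In S smin Hmin)) as [[Hlo _] _].
  pose proof (dot_of_zpt smax r). pose proof (dot_of_zpt smin r).
  rewrite minus_IZR in *. unfold apply_unimod, dot, r in *; simpl in *. lra.
Qed.

Theorem lemma2p1 (S : list zpt) (d : Z) (v w : zpt) :
  S <> nil ->
  lw_is (conv S) (IZR d) ->
  width_dir (conv S) v ->
  width_dir (conv S) w ->
  lin_indep v w ->
  ls_square_is (conv S) d.
Proof.
  intros Hne Hlw Hv Hw Hvw.
  pose proof (width_dir_width_le S d v Hlw Hv) as Wv.
  pose proof (width_dir_width_le S d w Hlw Hw) as Ww.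
  destruct (unimodular_completion_width_le S d v w (proj1 Hv) Wv Ww Hvw) as [z [Hvz Wz]].
  split; [| split].
  - destruct S as [|s S]; [congruence |].
    specialize (Wv s s (or_introl eq_refl) (or_introl eq_refl)). lia.
  - exact (fits_in_square_of_unimodular_pair S d v z Hne Hvz Wv Wz).
  - intros d' _ Hfit. apply le_IZR. exact (lw_le_of_fits_in_square S _ d' Hne Hlw Hfit).
Qed.
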